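(* Let $X$ be a real Banach space, considered with its weak topology, and let $X^*$ be its dual with the weak$^*$ topology; finite powers carry the product topologies. Let $\kappa$ be an infinite cardinal. Then $hL(X^n)\leq\kappa$ for every $n\in\mathbb N$ if and only if $hd((X^* )^n)\leq\kappa$ for every $n\in\mathbb N$.
   Context: $hd(Z)=\sup\{d(Y):Y\subseteq Z\}$ with $d(Y)$ the least size of a dense subset of $Y$; $hL(Z)=\sup\{L(Y):Y\subseteq Z\}$ with $L(Y)$ the least $\kappa$ such that every open cover of $Y$ has a subcover of size at most $\kappa$. The weak topology on $X$ is generated by the functionals in $X^*$; the weak$^*$ topology on $X^*$ is generated by the evaluations at points of $X$. *)

From Stdlib Require Import Reals List.
Open Scope R_scope.

Record Banach := {
  carrier :> Type;
  vzero : carrier;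
  vadd : carrier -> carrier -> carrier;
  vopp : carrier -> carrier;
  vscal : R -> carrier -> carrier;
  vnorm : carrier -> R;
  vadd_assoc : forall x y z, vadd x (vadd y z) = vadd (vadd x y) z;
  vadd_comm : forall x y, vadd x y = vadd y x;
  vadd_0 : forall x, vadd x vzero = x;
  vadd_opp : forall x, vadd x (vopp x) = vzero;
  vscal_1 : forall x, vscal 1 x = x;
  vscal_assoc : forall a b x, vscal a (vscal b x) = vscal (a * b) x;
  vscal_distr_v : forall a x y, vscal a (vadd x y) = vadd (vscal a x) (vscal a y);
  vscal_distr_s : forall a b x, vscal (a + b) x = vadd (vscal a x) (vscal b x);
  vnorm_nonneg : forall x, 0 <= vnorm x;
  vnorm_eq0 : forall x, vnorm x = 0 -> x = vzero;
  vnorm_scal : forall a x, vnorm (vscal a x) = Rabs a * vnorm x;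
  vnorm_triangle : forall x y, vnorm (vadd x y) <= vnorm x + vnorm y;
  vcomplete : forall u : nat -> carrier,
    (forall eps, eps > 0 -> exists N, forall m n, (N <= m)%nat -> (N <= n)%nat ->
        vnorm (vadd (u m) (vopp (u n))) < eps) ->
    exists l, forall eps, eps > 0 -> exists N, forall n, (N <= n)%nat ->
        vnorm (vadd (u n) (vopp l)) < eps
}.

Definition is_dual_elt (X : Banach) (f : X -> R) : Prop :=
  (forall x y, f (vadd X x y) = f x + f y) /\
  (forall a x, f (vscal X a x) = a * f x) /\
  (exists C, forall x, Rabs (f x) <= C * vnorm X x).

Definition Dual (X : Banach) : Type := { f : X -> R | is_dual_elt X f }.

Definition init_open {T I : Type} (F : I -> T -> R) (U : T -> Prop) : Prop :=
  forall x, U x -> exists (l : list I) (eps : R), eps > 0 /\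
    forall y, (forall i, In i l -> Rabs (F i y - F i x) < eps) -> U y.

(* Finite powers T^n, and the product of the initial topology
   (= initial topology of the family f(pi_k x)). *)
Fixpoint pow (T : Type) (n : nat) : Type :=
  match n with O => unit | S m => (T * pow T m)%type end.

Fixpoint powI (I : Type) (n : nat) : Type :=
  match n with O => Empty_set | S m => (I + powI I m)%type end.

Fixpoint powF {T I : Type} (F : I -> T -> R) (n : nat) : powI I n -> pow T n -> R :=
  match n as n0 return powI I n0 -> pow T n0 -> R with
  | O => fun i _ => match i with end
  | S m => fun i x => match i with
                      | inl j => F j (fst x)
                      | inr j => powF F m j (snd x)
                      end
  end.

Definition weak_family (X : Banach) : Dual X -> X -> R := fun f x => proj1_sig f x.
Definition weakstar_family (X : Banach) : X -> Dual X -> R := fun x f => proj1_sig f x.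

Definition card_le (A K : Type) : Prop := exists f : A -> K, forall a b, f a = f b -> a = b.
Definition infinite_type (K : Type) : Prop := exists f : nat -> K, forall a b, f a = f b -> a = b.

Definition hL_le {T : Type} (op : (T -> Prop) -> Prop) (K : Type) : Prop :=
  forall (Y : T -> Prop) (J : Type) (U : J -> T -> Prop),
    (forall j, op (U j)) -> (forall y, Y y -> exists j, U j y) ->
    exists S : J -> Prop, card_le {j | S j} K /\
      forall y, Y y -> exists j, S j /\ U j y.

Definition hd_le {T : Type} (op : (T -> Prop) -> Prop) (K : Type) : Prop :=
  forall Y : T -> Prop, exists D : T -> Prop,
    (forall x, D x -> Y x) /\ card_le {x | D x} K /\
    forall U, op U -> (exists y, Y y /\ U y) -> exists d, D d /\ U d.

(* A basic open set of T^n (for a family F : I -> T -> R) is cut out by finitely many tests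
   (coordinate, member of F) and a radius.  Recording the coordinates and the cells, in the
   grid of mesh 1/(m+1), of the test values at a point gives a countable set of "shapes";
   recording the members of F tested gives a witness in I^k.  The resulting grid-box
   relation between T^n and I^k is open in the witness for the dual family on I^k and
   approximates the topology of T^n ([grid_box_open], [grid_box_approximates]).  Two
   abstract lemmas transfer cardinal bounds along any countably indexed approximating
   family: small subcovers of boxes yield dense sets ([hd_of_hL]), and dense sets of
   witnesses yield small subcovers ([hL_of_hd]).  Gluing countably many sets of size
   <= |K| needs |nat * K| <= |K|, proved for infinite K by Zorn's lemma ([Absorption]). *)
From Pilot Require Import Defs.
From Stdlib Require Import Reals List Lia Lra ZArith Cantor ClassicalEpsilon ProofIrrelevance.
From mathcomp Require all_boot classical_sets boolp functions cardinality zify.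

Definition pair_code (p : nat * nat) : nat := Cantor.to_nat p.
Arguments pair_code : simpl never.

Lemma pair_code_inj (p q : nat * nat) : pair_code p = pair_code q -> p = q.
Proof.
  intros E. apply (f_equal Cantor.of_nat) in E. unfold pair_code in E.
  now rewrite !Cantor.cancel_of_to in E.
Qed.

Lemma pair_code_surj (k : nat) : exists p, pair_code p = k.
Proof. exists (Cantor.of_nat k). apply Cantor.cancel_to_of. Qed.

Module Absorption.
Import all_boot classical_sets boolp functions cardinality zify.
Local Open Scope classical_set_scope.
Local Open Scope card_scope.

Section SelfEmbedding.
Variable K : Type.

(* A set [G] of triples ((n, b), a) is read as a relation from nat * K to K;
   [values G] is the set of its values. *)
Definition values (G : set ((nat * K) * K)) : set K := fun b => exists p, G (p, b).

(* [G] is the graph of an injection of nat * (values G) into values G. *)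
Definition self_embedding (G : set ((nat * K) * K)) : Prop :=
  [/\ (forall p a a', G (p, a) -> G (p, a') -> a = a'),
      (forall p p' a, G (p, a) -> G (p', a) -> p = p'),
      (forall n b, values G b -> exists a, G ((n, b), a)) &
      (forall n b a, G ((n, b), a) -> values G b)].

(* Self-embeddings are closed under unions of chains, so Zorn's lemma applies. *)
Lemma self_embedding_chain (F : set (set ((nat * K) * K))) :
  F `<=` self_embedding -> total_on F subset -> self_embedding (\bigcup_(G in F) G).
Proof.
move=> Femb tot; split.
- move=> p a a' [G FG Ga] [G' FG' Ga'].
  have [/(_ _ Ga) G'a|/(_ _ Ga') Ga2] := tot _ _ FG FG'.
  + by have [fun' _ _ _] := Femb _ FG'; exact: fun' G'a Ga'.
  + by have [fun' _ _ _] := Femb _ FG; exact: fun' Ga Ga2.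
- move=> p p' a [G FG Ga] [G' FG' Ga'].
  have [/(_ _ Ga) G'a|/(_ _ Ga') Ga2] := tot _ _ FG FG'.
  + by have [_ inj _ _] := Femb _ FG'; exact: inj G'a Ga'.
  + by have [_ inj _ _] := Femb _ FG; exact: inj Ga Ga2.
- move=> n b [p [G FG Gp]].
  have [_ _ dom _] := Femb _ FG; have [a Ga] := dom n b (ex_intro _ p Gp).
  by exists a, G.
- move=> n b a [G FG Ga].
  have [_ _ _ rng] := Femb _ FG; have [p Gp] := rng _ _ _ Ga.
  by exists p, G.
Qed.

Definition block (j : nat -> K) : set ((nat * K) * K) :=
  fun t => exists n m, t = ((n, j m), j (pair_code (n, m))).

Lemma self_embedding_extend G (j : nat -> K) : self_embedding G -> injective j ->
  (forall m, ~ values G (j m)) -> self_embedding (G `|` block j).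
Proof.
move=> [Gfun Ginj Gdom Grng] jinj fresh; split.
- move=> p a a' [Ga|[n [m [-> ->]]]] [Ga'|[n' [m' Ea']]].
  + exact: Gfun Ga Ga'.
  + by case: Ea' => Ep _; subst p; case: (fresh m' (Grng _ _ _ Ga)).
  + by case: (fresh m (Grng _ _ _ Ga')).
  + by case: Ea' => <- /jinj <- ->.
- move=> p p' a [Ga|[n [m [-> ->]]]] [Ga'|[n' [m' Ea']]].
  + exact: Ginj Ga Ga'.
  + by case: Ea' => _ Ea; subst a; case: (fresh _ (ex_intro _ p Ga)).
  + by case: (fresh _ (ex_intro _ p' Ga')).
  + by case: Ea' => -> /jinj /pair_code_inj [-> ->].
- move=> n b [p [Gp|[n' [m' Ep]]]].
  + by have [a Ga] := Gdom n b (ex_intro _ p Gp); exists a; left.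
  + case: Ep => _ Eb; subst b.
    by exists (j (pair_code (n, pair_code (n', m')))); right; exists n, (pair_code (n', m')).
- move=> n b a [Ga|[n' [m' Ea]]].
  + by have [p Gp] := Grng _ _ _ Ga; exists p; left.
  + case: Ea => _ -> _; have [[u v] <-] := pair_code_surj m'.
    by exists (u, j v); right; exists u, v.
Qed.

Lemma nat_injection (C : set K) : [set: nat] #<= C ->
  exists j : nat -> K, (forall n, C (j n)) /\ injective j.
Proof.
move/card_leP => [f].
have inT (n : nat) : n \in [set: nat] by rewrite in_setT.
exists (fun n => val (f (exist _ n (inT n)))); split.
  by move=> n; have := valP (f (exist _ n (inT n))); rewrite inE.
move=> a b /val_inj /(@inj _ _ _ f).
by rewrite !in_setT => /(_ isT isT) [].
Qed.

Section Maximal.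
Variable G : set ((nat * K) * K).
Hypothesis G_emb : self_embedding G.
Hypothesis G_max : forall G', G `<` G' -> ~ self_embedding G'.

Lemma maximal_meets (j : nat -> K) : injective j -> exists m, values G (j m).
Proof.
move=> jinj; apply: contrapT => miss.
have fresh m : ~ values G (j m) by move=> Gm; apply: miss; exists m.
apply: (G_max (G `|` block j)); last exact: self_embedding_extend.
split; first by move=> t Gt; left.
move=> /(_ ((0, j 0), j (pair_code (0, 0))))%N sub.
have [p Gp] : values G (j 0%N).
  have [_ _ _ rng] := G_emb; apply: rng; apply: sub; right; by exists 0%N, 0%N.
by apply: (fresh 0%N); exists p.
Qed.

Lemma maximal_cofinite : finite_set (~` values G).
Proof.
apply: contrapT => /infiniteP /nat_injection [j [out jinj]].
by have [m Gm] := maximal_meets j jinj; exact: out m Gm.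
Qed.

End Maximal.

Theorem nat_prod_absorbed : infinite_type K -> Defs.card_le (nat * K)%type K.
Proof.
move=> [e einj].
have [G [G_emb G_max]] := Zorn_bigcup self_embedding_chain.
have [Gfun Ginj Gdom _] := G_emb.
have [c cinj] := countable_injP _ (finite_set_countable (maximal_cofinite G G_emb G_max)).
have [m0 Gm0] := maximal_meets G G_emb G_max e einj.
(* (n, b) is sent to (2n, b) if b is a value of G, and otherwise, b being one of finitely
   many points numbered by c, to (2 <n, c b> + 1, e m0); both lie in the domain of G. *)
pose q (p : nat * K) : nat * K := if pselect (values G p.2) then (2 * p.1, p.2)%N
  else (2 * pair_code (p.1, c p.2) + 1, e m0)%N.
have q_values p : values G (q p).2 by rewrite /q; case: pselect.
have q_inj : injective q.
  move=> [n b] [n' b']; rewrite /q /=.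
  case: (pselect (values G b)) => hb; case: (pselect (values G b')) => hb' /= [].
  - by move=> E1 ->; congr pair; lia.
  - by move=> E1 _; lia.
  - by move=> E1 _; lia.
  - move=> E1; have /pair_code_inj [-> Ec] : pair_code (n, c b) = pair_code (n', c b') by lia.
    by rewrite (cinj b b') ?inE.
have /all_sig[g Hg] p : {a | values G p.2 -> G (p, a)}.
  apply: cid; case: (pselect (values G p.2)) => [/(Gdom p.1 p.2) [a Ga]|out].
    by exists a; case: p Ga.
  by exists (e 0%N) => /out.
exists (fun p => g (q p)) => p p' E; apply: q_inj.
apply: (Ginj _ _ (g (q p))); first exact: Hg (q_values p).
by rewrite E; exact: Hg (q_values p').
Qed.

End SelfEmbedding.
End Absorption.

Open Scope R_scope.

Lemma sig_eq {A : Type} {P : A -> Prop} (a b : {x | P x}) :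
  proj1_sig a = proj1_sig b -> a = b.
Proof. destruct a, b; simpl; intros ->. f_equal. apply proof_irrelevance. Qed.

Lemma ex_witness {A : Type} {P : A -> Prop} : (exists x, P x) -> {x | P x}.
Proof. apply constructive_indefinite_description. Qed.

Lemma card_le_image {T U K : Type} (A : T -> Prop) (f : {x | A x} -> U) :
  card_le {x | A x} K -> card_le {y | exists t, y = f t} K.
Proof.
  intros [h h_inj].
  pose (pre := fun y : {y | exists t, y = f t} => ex_witness (proj2_sig y)).
  exists (fun y => h (proj1_sig (pre y))).
  intros a b E. apply h_inj in E. apply sig_eq.
  rewrite (proj2_sig (pre a)), (proj2_sig (pre b)), E. reflexivity.
Qed.

Lemma card_le_countable_union {T K C : Type} (code : C -> nat) (A : C -> T -> Prop) :
  card_le (nat * K)%type K -> (forall c c', code c = code c' -> c = c') ->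
  (forall c, card_le {x | A c x} K) -> card_le {x | exists c, A c x} K.
Proof.
  intros [h h_inj] code_inj HA.
  pose (hc := fun c => proj1_sig (ex_witness (HA c))).
  assert (hc_inj : forall c c' (a : {x | A c x}) (a' : {x | A c' x}),
             c = c' -> hc c a = hc c' a' -> proj1_sig a = proj1_sig a').
  { intros c c' a a' <- E. apply (proj2_sig (ex_witness (HA c))) in E. now subst. }
  pose (idx := fun s : {x | exists c, A c x} => ex_witness (proj2_sig s)).
  exists (fun s => h (code (proj1_sig (idx s)),
                      hc _ (exist _ (proj1_sig s) (proj2_sig (idx s))))).
  intros a b E. apply h_inj in E. injection E as E1 E2. apply code_inj in E1.
  apply sig_eq. exact (hc_inj _ _ _ _ E1 E2).
Qed.

Fixpoint code_list {A : Type} (f : A -> nat) (l : list A) : nat :=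
  match l with nil => O | a :: l' => S (pair_code (f a, code_list f l')) end.

Lemma code_list_inj {A : Type} (f : A -> nat) :
  (forall a b, f a = f b -> a = b) -> forall l l', code_list f l = code_list f l' -> l = l'.
Proof.
  intros f_inj l. induction l as [|a l IH]; intros [|b l'] E; simpl in E; try discriminate; auto.
  injection E as E. apply pair_code_inj in E. injection E as Eab El.
  now rewrite (f_inj _ _ Eab), (IH _ El).
Qed.

Definition code_Z (z : Z) : nat := pair_code (Z.to_nat z, Z.to_nat (- z)).

Lemma code_Z_inj (z z' : Z) : code_Z z = code_Z z' -> z = z'.
Proof. unfold code_Z. intros E. apply pair_code_inj in E. injection E. lia. Qed.

Section Approximation.
Context {Sh : Type}.

Definition approximates {A : Type} (op : (A -> Prop) -> Prop) {B : Sh -> Type}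
  (V : forall s, A -> B s -> Prop) : Prop :=
  forall a U, op U -> U a -> exists s b, V s a b /\ forall a', V s a' b -> U a'.

Definition open_sections {A : Type} {B : Sh -> Type}
  (op : forall s, (B s -> Prop) -> Prop) (V : forall s, A -> B s -> Prop) : Prop :=
  forall s a, op s (V s a).

Variable K : Type.
Hypothesis absorb : card_le (nat * K)%type K.
Variable code : Sh -> nat.
Hypothesis code_inj : forall s s', code s = code s' -> s = s'.

(* Hereditary Lindelofness of all witness spaces bounds the hereditary density of the
   approximated space: a small subcover of the sections of [Y] gives a dense subset. *)
Lemma hd_of_hL {Q : Type} (opQ : (Q -> Prop) -> Prop) {P : Sh -> Type}
  (opP : forall s, (P s -> Prop) -> Prop) (V : forall s, Q -> P s -> Prop) :
  approximates opQ V -> open_sections opP V -> (forall s, hL_le (opP s) K) -> hd_le opQ K.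
Proof.
  intros approx sec_open hL Y.
  assert (subcover : forall s, exists S : {q | Y q} -> Prop, card_le {t | S t} K /\
            forall q p, Y q -> V s q p -> exists t, S t /\ V s (proj1_sig t) p).
  { intros s.
    destruct (hL s (fun p => exists q, Y q /\ V s q p) {q | Y q}
                (fun t => V s (proj1_sig t))) as [S [HS cover]].
    - intros t. apply sec_open.
    - intros p [q [Yq Vqp]]. exists (exist _ q Yq). exact Vqp.
    - exists S. split; [exact HS|]. intros q p Yq Vqp. apply cover. now exists q. }
  destruct (choice _ subcover) as [S HS].
  exists (fun q => exists s, exists t : {t | S s t}, q = proj1_sig (proj1_sig t)).
  split; [|split].
  - intros q [s [[[q' Yq'] St] E]]. simpl in E. now subst.
  - apply (card_le_countable_union code _ absorb code_inj).
    intros s. apply card_le_image, HS.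
  - intros U HU [y [Yy Uy]].
    destruct (approx y U HU Uy) as [s [p [Vyp inU]]].
    destruct (proj2 (HS s) y p Yy Vyp) as [t [St Vtp]].
    exists (proj1_sig t). split; [|exact (inU _ Vtp)].
    exists s, (exist _ t St). reflexivity.
Qed.

(* Dually, hereditary density of all witness spaces bounds the hereditary Lindelof number:
   a cover is refined through the witnesses of its points, and a dense set of witnesses
   recovers a small subcover. *)
Lemma hL_of_hd {P : Type} (opP : (P -> Prop) -> Prop) {Q : Sh -> Type}
  (opQ : forall s, (Q s -> Prop) -> Prop) (V : forall s, P -> Q s -> Prop) :
  approximates opP V -> open_sections opQ V -> (forall s, hd_le (opQ s) K) -> hL_le opP K.
Proof.
  intros approx sec_open hd Y J U HU cover.
  assert (witness : forall y : {y | Y y}, exists w : J * {s : Sh & Q s},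
    V (projT1 (snd w)) (proj1_sig y) (projT2 (snd w)) /\
    forall p, V (projT1 (snd w)) p (projT2 (snd w)) -> U (fst w) p).
  { intros [y Yy]. destruct (cover y Yy) as [j Uj].
    destruct (approx y (U j) (HU j) Uj) as [s [q [Vyq inU]]].
    exists (j, existT Q s q). auto. }
  destruct (choice _ witness) as [w Hw].
  assert (subcover : forall s, exists S : J -> Prop, card_le {j | S j} K /\
    forall y q, snd (w y) = existT Q s q -> exists j, S j /\ U j (proj1_sig y)).
  { intros s.
    destruct (hd s (fun q => exists y, snd (w y) = existT Q s q)) as [D [DY [HD dense]]].
    assert (origin : forall d : {d | D d}, exists y, snd (w y) = existT Q s (proj1_sig d))
      by (intros [d Dd]; exact (DY d Dd)).
    destruct (choice _ origin) as [yf Hyf].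
    exists (fun j => exists d : {d | D d}, j = fst (w (yf d))). split.
    - apply card_le_image, HD.
    - intros y q E.
      assert (Vyq : V s (proj1_sig y) q) by (pose proof (proj1 (Hw y)) as H; now rewrite E in H).
      destruct (dense (V s (proj1_sig y)) (sec_open s _)
                  (ex_intro _ q (conj (ex_intro _ y E) Vyq))) as [d [Dd Vyd]].
      exists (fst (w (yf (exist _ d Dd)))). split; [now exists (exist _ d Dd)|].
      pose proof (proj2 (Hw (yf (exist _ d Dd)))) as inU.
      rewrite (Hyf (exist _ d Dd)) in inU. exact (inU _ Vyd). }
  destruct (choice _ subcover) as [S HS].
  exists (fun j => exists s, S s j). split.
  - exact (card_le_countable_union code S absorb code_inj (fun s => proj1 (HS s))).
  - intros y Yy. destruct (snd (w (exist _ y Yy))) as [s q] eqn:E.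
    destruct (proj2 (HS s) _ q E) as [j [Sj Uj]].
    exists j. split; [now exists s | exact Uj].
Qed.

End Approximation.

Section InitialTopology.
Context {T I : Type} (F : I -> T -> R).

Lemma open_ext (A B : T -> Prop) :
  (forall x, A x <-> B x) -> init_open F A -> init_open F B.
Proof.
  intros AB HA x Bx. destruct (HA x (proj2 (AB x) Bx)) as [l [eps [Heps Hl]]].
  exists l, eps. split; [exact Heps|]. intros y Hy. apply AB, Hl, Hy.
Qed.

Lemma open_true : init_open F (fun _ => True).
Proof. intros x _. exists nil, 1. split; [lra | auto]. Qed.

Lemma open_and (A B : T -> Prop) :
  init_open F A -> init_open F B -> init_open F (fun x => A x /\ B x).
Proof.
  intros HA HB x [Ax Bx].
  destruct (HA x Ax) as [l1 [e1 [He1 H1]]], (HB x Bx) as [l2 [e2 [He2 H2]]].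
  exists (l1 ++ l2), (Rmin e1 e2). split; [now apply Rmin_pos|].
  intros y Hy. split; [apply H1 | apply H2]; intros i Hi; eapply Rlt_le_trans;
    try (apply Hy; apply in_or_app; auto); [apply Rmin_l | apply Rmin_r].
Qed.

Lemma open_forall_lt (A : nat -> T -> Prop) (k : nat) :
  (forall i, (i < k)%nat -> init_open F (A i)) ->
  init_open F (fun x => forall i, (i < k)%nat -> A i x).
Proof.
  induction k as [|k IH]; intros HA.
  - apply open_ext with (fun _ => True); [intros x; split; intros; auto; lia | apply open_true].
  - apply open_ext with (fun x => (forall i, (i < k)%nat -> A i x) /\ A k x).
    + intros x; split.
      * intros [Hlt Hk] i Hi. destruct (Nat.eq_dec i k) as [->|]; [exact Hk | apply Hlt; lia].
      * intros H. split; auto.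
    + apply open_and; auto.
Qed.

Lemma open_subbasic (i : I) (r d : R) : init_open F (fun x => Rabs (F i x - r) < d).
Proof.
  intros x Hx. exists (i :: nil), (d - Rabs (F i x - r)). split; [lra|].
  intros y Hy. specialize (Hy i (or_introl eq_refl)).
  replace (F i y - r) with ((F i y - F i x) + (F i x - r)) by ring.
  eapply Rle_lt_trans; [apply Rabs_triang | lra].
Qed.

End InitialTopology.

(* Coordinates of points of T^n (with a default value [d] out of range) and points of T^k
   built from lists; [Defs.pow] is qualified because Reals also defines [pow]. *)
Fixpoint coord {T : Type} (d : T) (n : nat) : nat -> Defs.pow T n -> T :=
  match n as n0 return nat -> Defs.pow T n0 -> T with
  | O => fun _ _ => d
  | S m => fun c x => match c with O => fst x | S c' => coord d m c' (snd x) end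
  end.

Fixpoint of_list {T : Type} (d : T) (k : nat) (l : list T) : Defs.pow T k :=
  match k with O => tt | S k' => (hd d l, of_list d k' (tl l)) end.

Lemma coord_of_list {T : Type} (d : T) (k : nat) (l : list T) (i : nat) :
  (i < k)%nat -> coord d k i (of_list d k l) = nth i l d.
Proof.
  revert l i; induction k as [|k IH]; intros l i Hi; [lia|].
  destruct i as [|i], l as [|a l]; simpl; try reflexivity.
  - rewrite IH by lia. now destruct i.
  - apply IH; lia.
Qed.

(* An index of the product family [powF F n] is a coordinate [slot] paired with a member
   [test] of the family. *)
Fixpoint slot {I : Type} (n : nat) : powI I n -> nat :=
  match n as n0 return powI I n0 -> nat with
  | O => fun i => match i with end
  | S m => fun i => match i with inl _ => O | inr j => S (slot m j) end
  end.

Fixpoint test {I : Type} (n : nat) : powI I n -> I :=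
  match n as n0 return powI I n0 -> I with
  | O => fun i => match i with end
  | S m => fun i => match i with inl a => a | inr j => test m j end
  end.

Lemma powF_slot {T I : Type} (F : I -> T -> R) (d : T) (n : nat) (i : powI I n) (x : Defs.pow T n) :
  powF F n i x = F (test n i) (coord d n (slot n i) x).
Proof. induction n; simpl; destruct i; simpl; auto. Qed.

Lemma powF_index {T I : Type} (F : I -> T -> R) (d : T) (n c : nat) (a : I) :
  (c < n)%nat -> exists i : powI I n, forall x, powF F n i x = F a (coord d n c x).
Proof.
  revert c; induction n as [|n IH]; intros c Hc; [lia|].
  destruct c as [|c]; [now exists (inl a)|].
  destruct (IH c) as [i Hi]; [lia|]. exists (inr i). intros x. apply Hi.
Qed.

Lemma open_coord {T I : Type} (F : I -> T -> R) (d : T) (n c : nat) (a : I) (r e : R) :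
  (c < n)%nat -> init_open (powF F n) (fun x => Rabs (F a (coord d n c x) - r) < e).
Proof.
  intros Hc. destruct (powF_index F d n c a Hc) as [i Hi].
  apply open_ext with (fun x => Rabs (powF F n i x - r) < e).
  - intros x. now rewrite Hi.
  - apply open_subbasic.
Qed.

Definition mesh (m : nat) : R := / INR (S m).

Lemma grid_point (m : nat) (v : R) : exists z : Z, Rabs (v - IZR z * mesh m) < mesh m.
Proof.
  unfold mesh. set (N := INR (S m)). assert (HN : 0 < N) by (apply lt_0_INR; lia).
  destruct (archimed (v * N)) as [up_gt up_le].
  exists (up (v * N) - 1)%Z. rewrite minus_IZR.
  assert (HNi : N * / N = 1) by (field; lra).
  assert (Hi : 0 < / N) by (apply Rinv_0_lt_compat; lra).
  set (u := IZR (up (v * N))) in *.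
  replace (v - (u - 1) * / N) with ((v * N - u + 1) * / N) by (field; lra).
  apply Rabs_def1; nra.
Qed.

Definition grid (m : nat) (v : R) : Z := proj1_sig (ex_witness (grid_point m v)).

Lemma grid_spec (m : nat) (v : R) : Rabs (v - IZR (grid m v) * mesh m) < mesh m.
Proof. exact (proj2_sig (ex_witness (grid_point m v))). Qed.

Lemma mesh_small (e : R) : 0 < e -> exists m : nat, 2 * mesh m < e.
Proof.
  intros He. destruct (archimed_cor1 (e / 2)) as [N [HN HN0]]; [lra|].
  exists (pred N). unfold mesh. replace (S (pred N)) with N by lia. lra.
Qed.

Lemma same_cell (a b r d : R) : Rabs (a - r) < d -> Rabs (b - r) < d -> Rabs (a - b) < 2 * d.
Proof.
  intros Ha Hb. replace (a - b) with ((a - r) - (b - r)) by ring.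
  eapply Rle_lt_trans; [apply Rabs_triang | rewrite Rabs_Ropp; lra].
Qed.

(* A shape is a mesh index together with a list of (coordinate, grid value) pairs. *)
Definition shape : Type := (nat * list (nat * Z))%type.

Definition code_shape (s : shape) : nat :=
  pair_code (fst s, code_list (fun p => pair_code (fst p, code_Z (snd p))) (snd s)).

Lemma code_shape_inj (s s' : shape) : code_shape s = code_shape s' -> s = s'.
Proof.
  destruct s as [m l], s' as [m' l']. unfold code_shape; simpl. intros E.
  apply pair_code_inj in E. injection E as -> E. f_equal.
  revert E. apply code_list_inj. intros [c z] [c' z'] Ep.
  apply pair_code_inj in Ep. injection Ep as -> Ez. now rewrite (code_Z_inj _ _ Ez).
Qed.

Section GridBoxes.
Context {T I : Type} (dT : T) (dI : I) (F : I -> T -> R) (n : nat).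

Definition grid_box (s : shape) (u : Defs.pow T n) (v : Defs.pow I (length (snd s))) : Prop :=
  forall i, (i < length (snd s))%nat ->
    Rabs (F (coord dI _ i v) (coord dT n (fst (nth i (snd s) (O, 0%Z))) u)
          - IZR (snd (nth i (snd s) (O, 0%Z))) * mesh (fst s)) < mesh (fst s).

Lemma grid_box_open :
  open_sections (fun s => init_open (powF (fun t b => F b t) (length (snd s)))) grid_box.
Proof.
  intros s u. apply open_forall_lt. intros i Hi.
  exact (open_coord (fun t b => F b t) dI _ i _ _ _ Hi).
Qed.

Definition test_shape (m : nat) (L : list (powI I n)) (u0 : Defs.pow T n) : shape :=
  (m, map (fun i => (slot n i, grid m (powF F n i u0))) L).

Lemma test_shape_entry (m : nat) (L : list (powI I n)) (u0 : Defs.pow T n) (i : nat) (a : powI I n) :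
  nth_error L i = Some a ->
  nth i (snd (test_shape m L u0)) (O, 0%Z) = (slot n a, grid m (powF F n a u0)) /\
  coord dI _ i (of_list dI (length (snd (test_shape m L u0))) (map (test n) L)) = test n a.
Proof.
  intros Ha. assert (Hi : (i < length L)%nat) by (apply nth_error_Some; congruence).
  simpl. split.
  - apply nth_error_nth. now rewrite nth_error_map, Ha.
  - rewrite coord_of_list by now rewrite length_map.
    apply nth_error_nth. now rewrite nth_error_map, Ha.
Qed.

Lemma grid_box_tests (m : nat) (L : list (powI I n)) (u0 u : Defs.pow T n) :
  grid_box (test_shape m L u0) u (of_list dI _ (map (test n) L)) <->
  forall a, In a L -> Rabs (powF F n a u - IZR (grid m (powF F n a u0)) * mesh m) < mesh m.
Proof.
  split.
  - intros Hbox a Ha. destruct (In_nth_error _ _ Ha) as [i Hi].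
    destruct (test_shape_entry m L u0 i a Hi) as [Hs Hv].
    assert (Hlt : (i < length (snd (test_shape m L u0)))%nat)
      by (simpl; rewrite length_map; apply nth_error_Some; congruence).
    specialize (Hbox i Hlt). rewrite Hs, Hv in Hbox.
    now rewrite (powF_slot F dT).
  - intros H i Hi. simpl in Hi. rewrite length_map in Hi.
    destruct (nth_error L i) as [a|] eqn:E; [|apply nth_error_None in E; lia].
    destruct (test_shape_entry m L u0 i a E) as [Hs Hv].
    rewrite Hs, Hv. simpl. rewrite <- (powF_slot F dT). apply H.
    eapply nth_error_In; eauto.
Qed.

(* Grid boxes approximate the product topology on T^n: a subbasic neighbourhood given
   by finitely many tests and a radius eps contains the box of the tests with mesh < eps/2. *)
Lemma grid_box_approximates : approximates (init_open (powF F n)) grid_box.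
Proof.
  intros u0 U HU Uu0. destruct (HU u0 Uu0) as [L [eps [Heps inU]]].
  destruct (mesh_small eps Heps) as [m Hm].
  exists (test_shape m L u0), (of_list dI _ (map (test n) L)). split.
  - apply grid_box_tests. intros a _. apply grid_spec.
  - intros u Hbox. apply inU. intros a Ha.
    pose proof (proj1 (grid_box_tests m L u0 u) Hbox a Ha) as Hu.
    eapply Rlt_trans; [|exact Hm]. exact (same_cell _ _ _ _ Hu (grid_spec m _)).
Qed.

End GridBoxes.

Theorem pairing_duality {A B : Type} (a0 : A) (b0 : B) (e : B -> A -> R) (K : Type) :
  card_le (nat * K)%type K ->
  (forall n, hL_le (init_open (powF e n)) K) <->
  (forall n, hd_le (init_open (powF (fun a b => e b a) n)) K).
Proof.
  intros absorb. split; intros H n.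
  - apply (hd_of_hL K absorb code_shape code_shape_inj _
             (fun s => init_open (powF e (length (snd s)))) (grid_box b0 a0 (fun a b => e b a) n)).
    + apply grid_box_approximates.
    + apply grid_box_open.
    + intros s. apply H.
  - apply (hL_of_hd K absorb code_shape code_shape_inj _
             (fun s => init_open (powF (fun a b => e b a) (length (snd s)))) (grid_box a0 b0 e n)).
    + apply grid_box_approximates.
    + apply grid_box_open.
    + intros s. apply H.
Qed.

Definition zero_functional (X : Banach) : Dual X.
Proof.
  exists (fun _ => 0). split; [|split]; [intros; ring | intros; ring |].
  exists 0. intros x. rewrite Rabs_R0. lra.
Defined.

Theorem mainTheorem10 (X : Banach) (K : Type) (HK : infinite_type K) :
  (forall n : nat, hL_le (init_open (powF (weak_family X) n)) K) <->
  (forall n : nat, hd_le (init_open (powF (weakstar_family X) n)) K).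
Proof.
  exact (pairing_duality (vzero X) (zero_functional X) (weak_family X) K
           (Absorption.nat_prod_absorbed K HK)).
Qed.
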